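(* Let $k\in\mathbb N$, $E\subseteq W(A)$ and $\vec s=(s_n(x))_{n=0}^\infty\in V^\infty(A)$ such that $E$ is $k$-large in $\vec s$. Then there exist $m\ge1$, a variable word $w(x)\in\langle (s_n(x))_{n=0}^{m-1}\,\|\,(A_{k+n})_{n=0}^{m-1}\rangle_v$ and $\vec t\in V^\infty(A)$ with $\vec t\le_{k+m}(s_{m+n}(x))_{n=0}^\infty$ such that, setting $F=\{w(a):a\in A_k\}$, the set $E\cap E_F$ is $(k+m)$-large in $\vec t$.
   Context: $\mathbb N=\{0,1,2,\dots\}$. Fix an increasing sequence $A_0\subseteq A_1\subseteq A_2\subseteq\cdots$ of finite nonempty alphabets and set $A=\bigcup_{n\in\mathbb N}A_n$. $W(A)$ denotes the set of all finite words over $A$, including the empty word; words are concatenated by juxtaposition. Fix a symbol $x\notin A$. A variable word over $A$ is a finite word over $A\cup\{x\}$ in which $x$ occurs at least once; $V(A)$ is the set of variable words. For $s(x)\in V(A)$ and $a\in A\cup\{x\}$, $s(a)$ is obtained by replacing every occurrence of $x$ by $a$. $V^\infty(A)$ is the set of infinite sequences of variable words. For a sequence $(s_n(x))_{n\in I}$ of variable words and a sequence $(B_n)_{n\in I}$ of finite subsets of $A$, both indexed by a set $I\subseteq\mathbb N$ that is either a finite interval or of the form $\{m,m+1,\dots\}$: the constant span $\langle (s_n(x))_{n\in I}\,\|\,(B_n)_{n\in I}\rangle_c$ is the set of all words $s_{l_0}(a_0)s_{l_1}(a_1)\cdots s_{l_j}(a_j)$ with $j\ge0$, $l_0<\dots<l_j$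 in $I$ and $a_i\in B_{l_i}$ for each $i$; the variable span $\langle (s_n(x))_{n\in I}\,\|\,(B_n)_{n\in I}\rangle_v$ is the set of all words $s_{l_0}(a_0)\cdots s_{l_j}(a_j)$ with $j\ge0$, $l_0<\dots<l_j$ in $I$, $a_i\in B_{l_i}\cup\{x\}$ for each $i$, and at least one $a_i=x$. (E.g. $(A_{k+n})_{n=p}^{q}$ denotes the sequence $B_n=A_{k+n}$, $p\le n\le q$.) Extracted $k$-subsequences: let $k\in\mathbb N$ and $\vec s=(s_n(x))_{n=0}^\infty\in V^\infty(A)$. A finite sequence $(t_n(x))_{n=0}^l$ of variable words is an extracted $k$-subsequence of $\vec s$ if there exist integers $0=m_0<m_1<\dots<m_{l+1}$ with $t_i(x)\in\langle (s_n(x))_{n=m_i}^{m_{i+1}-1}\,\|\,(A_{k+n})_{n=m_i}^{m_{i+1}-1}\rangle_v$ for all $0\le i\le l$. An infinite sequence $\vec t=(t_n(x))_{n=0}^\infty$ is an extracted $k$-subsequence of $\vec s$ if each initial segment $(t_n(x))_{n=0}^l$ is a finite extracted $k$-subsequence of $\vec s$. We write $\vec t\le_k\vec s$. A set $E\subseteq W(A)$ is $k$-large in $\vec s\in V^\infty(A)$ if $E\cap\langle\vec w\,\|\,(A_{k+n})_{n=0}^\infty\rangle_c\neq\emptyset$ for every $\vec w\in V^\infty(A)$ with $\vec w\le_k\vec s$. For $E\subseteq W(A)$ and nonempty $F\subseteq W(A)$, $E_F=\{z\in W(A): wz\in E\text{ for every }w\in F\}$. *)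

From mathcomp Require Import all_boot.
Set Implicit Arguments. Unset Strict Implicit. Unset Printing Implicit Defensive.

Section Words.
Variable T : eqType.

(* words are seq T; variable words are seq (option T), None standing for x *)
Definition vword := seq (option T).
Definition vseqs := nat -> vword.

Definition subst (s : vword) (a : T) : seq T :=
  map (fun o => match o with Some b => b | None => a end) s.
Definition substx (s : vword) (a : option T) : vword :=
  map (fun o => match o with Some b => Some b | None => a end) s.

Variable A : nat -> seq T.

Definition inA (b : T) : Prop := exists n, b \in A n.
Definition isW (z : seq T) : Prop := forall b, b \in z -> inA b.
Definition is_vword (w : vword) : Prop :=
  None \in w /\ forall b, Some b \in w -> inA b.
Definition is_vseq (s : vseqs) : Prop := forall n, is_vword (s n).

Definition cspan (s : vseqs) (I : nat -> Prop) (B : nat -> seq T) (z : seq T) : Prop :=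
  exists js : seq (nat * T),
    js != [::] /\ sorted ltn (map fst js) /\
    (forall p, p \in js -> I p.1 /\ p.2 \in B p.1) /\
    z = flatten (map (fun p => subst (s p.1) p.2) js).

Definition vspan (s : vseqs) (I : nat -> Prop) (B : nat -> seq T) (z : vword) : Prop :=
  exists js : seq (nat * option T),
    js != [::] /\ sorted ltn (map fst js) /\
    (forall p, p \in js -> I p.1 /\
        match p.2 with Some a => a \in B p.1 | None => True end) /\
    has (fun p => p.2 == None) js /\
    z = flatten (map (fun p => substx (s p.1) p.2) js).

Definition fin_extracted (k l : nat) (t s : vseqs) : Prop :=
  exists m : nat -> nat,
    m 0 = 0 /\ (forall i, i <= l -> m i < m i.+1) /\
    forall i, i <= l ->
      vspan s (fun n => m i <= n < m i.+1) (fun n => A (k + n)) (t i).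

Definition extracted (k : nat) (t s : vseqs) : Prop :=
  forall l, fin_extracted k l t s.

Definition large (k : nat) (E : seq T -> Prop) (s : vseqs) : Prop :=
  forall w, is_vseq w -> extracted k w s ->
    exists z, E z /\ cspan w (fun _ => True) (fun n => A (k + n)) z.

Definition E_F (E : seq T -> Prop) (F : seq T -> Prop) (z : seq T) : Prop :=
  isW z /\ forall u, F u -> E (u ++ z).

End Words.

From mathcomp Require Import all_boot.
From Stdlib Require Import Classical ClassicalEpsilon FunctionalExtensionality.
Set Implicit Arguments. Unset Strict Implicit. Unset Printing Implicit Defensive.

(* Assuming the conclusion fails, we construct
   v_0, v_1, ... extracted from s at level k such that no word p v_n(a), with p
   a constant word spanned by v_0 .. v_{n-1} and a \in A_{k+n}, lies in E; then
   E misses the constant span of (v_n)_n, contradicting its largeness. The word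
   v_n is c(x) g where c is a line, given by the Hales-Jewett theorem, of the
   remaining sequence, monochromatic for the colouring by membership in E of
   the words p c(a) g, and g \in E is obtained by applying the failure of the
   conclusion to each word p c(x), so that some p c(a0) g is not in E. *)

Definition holds (P : Prop) : bool :=
  if excluded_middle_informative P then true else false.

Lemma holdsP (P : Prop) : reflect P (holds P).
Proof. by rewrite /holds; case: excluded_middle_informative => H; constructor. Qed.

Lemma exists_min (P : nat -> Prop) : (exists n, P n) ->
  exists n, P n /\ forall m, P m -> n <= m.
Proof.
move=> exP; have exPb : exists n, holds (P n) by case: exP => n /holdsP; exists n.
case: (ex_minnP exPb) => n /holdsP Pn min_n; exists n; split=> // m /holdsP; exact: min_n.
Qed.

Lemma sorted_catP (a b : seq nat) : sorted ltn (a ++ b) <->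
  [/\ sorted ltn a, sorted ltn b & forall x y, x \in a -> y \in b -> x < y].
Proof.
rewrite !(sorted_pairwise ltn_trans) pairwise_cat.
split=> [/and3P[/allrelP ab -> ->] //|[-> -> ab]].
by rewrite !andbT; apply/allrelP=> x y; exact: ab.
Qed.

Lemma pigeonhole (C : eqType) (cols : seq C) (f : nat -> C) :
  (forall n, n <= size cols -> f n \in cols) ->
  exists i j, [/\ i < j, j <= size cols & f i = f j].
Proof.
move=> f_cols; pose s := map f (iota 0 (size cols).+1).
have /(uniqPn (f 0)) [i [j [lt_ij j_s eq_ij]]] : ~~ uniq s.
  apply/negP=> uniq_s; suff : size s <= size cols by rewrite size_map size_iota ltnn.
  apply: uniq_leq_size uniq_s _ => y /mapP[n]; rewrite mem_iota ltnS => n_le ->.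
  exact: f_cols.
move: j_s eq_ij; rewrite size_map size_iota ltnS => j_le.
have i_le := leq_trans (ltnW lt_ij) j_le.
by rewrite !(nth_map 0) ?size_iota ?ltnS // !nth_iota ?ltnS // => eq_ij; exists i, j.
Qed.

Lemma sub_cons (X : eqType) (y : X) (s : seq X) : {subset s <= y :: s}.
Proof. exact: mem_subseq (subseq_cons s y). Qed.
Arguments sub_cons {X y s}.

Fixpoint words_of (X : Type) (L : seq X) (n : nat) : seq (seq X) :=
  if n is n'.+1 then [seq a :: w | a <- L, w <- words_of L n'] else [:: [::]].

Lemma mem_words_of (X : eqType) (L : seq X) n w :
  (w \in words_of L n) = (size w == n) && all (mem L) w.
Proof.
elim: n w => [|n IH] [|a w] //=; first by apply/negbTE/allpairsP=> -[[b u] []].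
apply/allpairsP/idP => [[[b u] /= [b_L u_n [-> ->]]]|/and3P[size_w a_L w_L]].
  by move: u_n; rewrite IH eqSS => /andP[-> ->]; rewrite b_L.
by exists (a, w); rewrite IH -(eqSS (size w)) size_w.
Qed.

Section Substitution.
Variable T : eqType.
Implicit Types (w : vword T) (z : seq T) (a : T) (o : option T).

Definition ocomp o1 o2 : option T := if o1 is Some b then Some b else o2.

Lemma size_subst w a : size (subst w a) = size w.
Proof. by rewrite size_map. Qed.

Lemma size_substx w o : size (substx w o) = size w.
Proof. by rewrite size_map. Qed.

Lemma subst_cat w w' a : subst (w ++ w') a = subst w a ++ subst w' a.
Proof. exact: map_cat. Qed.

Lemma substx_cat w w' o : substx (w ++ w') o = substx w o ++ substx w' o.
Proof. exact: map_cat. Qed.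

Lemma substx_None w : substx w None = w.
Proof. by elim: w => //= [[b|] w ->]. Qed.

Lemma subst_substx w o a : subst (substx w o) a = subst w (odflt a o).
Proof. by elim: w => //= [[b|] w ->] //; case: o. Qed.

Lemma substx_substx w o1 o2 : substx (substx w o1) o2 = substx w (ocomp o1 o2).
Proof. by elim: w => //= [[b|] w ->] //; case: o1. Qed.

Lemma map_Some_subst w a : map Some (subst w a) = substx w (Some a).
Proof. by elim: w => //= [[b|] w ->]. Qed.

Lemma subst_map_Some z a : subst (map Some z) a = z.
Proof. by elim: z => //= b z ->. Qed.
End Substitution.

Section HalesJewett.
Variable T : eqType.
Implicit Types (L : seq T) (c l : vword T) (rls : seq (vword T)).

Definition over_alph L c := all (fun o => if o is Some b then b \in L else true) c.

Lemma over_alphE L c : over_alph L c = all (mem (None :: map Some L)) c.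
Proof.
elim: c => //= o c ->; congr andb; case: o => [b|] //=.
by rewrite inE /= mem_map //; apply: Some_inj.
Qed.

Lemma over_alph_subst L c a : over_alph L c -> a \in L -> all (mem L) (subst c a).
Proof.
move=> c_L a_L; elim: c c_L => //= o c IH /andP[o_L c_L].
by rewrite IH // andbT; case: o o_L.
Qed.

Lemma over_alph_sub L L' c : {subset L <= L'} -> over_alph L c -> over_alph L' c.
Proof.
move=> sLL'; elim: c => //= o c IH /andP[o_L c_L].
by rewrite IH // andbT; case: o o_L => // b /sLL'.
Qed.

Definition HJ_property L := forall (C : eqType) (cols : seq C), exists N,
  forall chi : seq T -> C,
    (forall b, size b = N -> all (mem L) b -> chi b \in cols) ->
    exists c, [/\ size c = N, over_alph L c, None \in c &
      forall a a', a \in L -> a' \in L -> chi (subst c a) = chi (subst c a')].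

(* Concatenation of blocks filled blockwise: a list rls of blocks is stored
   last block first, so in l :: r the block l has number size r, and it is
   filled with the letter g (size r). *)
Fixpoint fill (g : nat -> T) rls : seq T :=
  if rls is l :: r then fill g r ++ subst l (g (size r)) else [::].
Fixpoint fillx (g : nat -> option T) rls : vword T :=
  if rls is l :: r then fillx g r ++ substx l (g (size r)) else [::].

Lemma size_fill g rls : size (fill g rls) = sumn (map size rls).
Proof. by elim: rls => //= l r IH; rewrite size_cat size_subst IH addnC. Qed.

Lemma size_fillx g rls : size (fillx g rls) = sumn (map size rls).
Proof. by elim: rls => //= l r IH; rewrite size_cat size_substx IH addnC. Qed.

Lemma subst_fillx g rls a : subst (fillx g rls) a = fill (fun m => odflt a (g m)) rls.
Proof. by elim: rls => //= l r IH; rewrite subst_cat subst_substx IH. Qed.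

Lemma eq_fill g g' rls :
  (forall m, m < size rls -> g m = g' m) -> fill g rls = fill g' rls.
Proof.
elim: rls => //= l r IH eq_g; rewrite eq_g // IH // => m lt_m.
by apply: eq_g; apply: ltn_trans lt_m _.
Qed.

Lemma fill_over L g rls : (forall l, l \in rls -> over_alph L l) ->
  (forall m, m < size rls -> g m \in L) -> all (mem L) (fill g rls).
Proof.
elim: rls => //= l r IH rls_L g_L; rewrite all_cat; apply/andP; split.
  apply: IH => [l1 l1_r|m lt_m]; first by apply: rls_L; rewrite inE l1_r orbT.
  by apply: g_L; apply: ltn_trans lt_m _.
by apply: over_alph_subst; [apply: rls_L; apply: mem_head | apply: g_L].
Qed.

Lemma fillx_over L g rls : (forall l, l \in rls -> over_alph L l) ->
  (forall m b, g m = Some b -> b \in L) -> over_alph L (fillx g rls).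
Proof.
move=> + g_L; elim: rls => //= l r IH rls_L; rewrite /over_alph all_cat.
apply/andP; split; first by apply: IH => l1 l1_r; apply: rls_L; rewrite inE l1_r orbT.
have /allP l_L := rls_L l (mem_head _ _); apply/allP => o /mapP[o' /l_L o'_L ->].
by case: o' o'_L => //= _; case E: (g (size r)) => [b|] //; apply: g_L E.
Qed.

Lemma fillx_has_x g rls i : (forall l, l \in rls -> None \in l) ->
  i < size rls -> g i = None -> None \in fillx g rls.
Proof.
elim: rls => //= l r IH rls_x lt_i g_i; rewrite mem_cat.
case: (ltnP i (size r)) => [lt_ir|ge_ir].
  by rewrite IH // => l1 l1_r; apply: rls_x; rewrite inE l1_r orbT.
have -> : size r = i by apply/eqP; rewrite eqn_leq ge_ir -ltnS.
by rewrite g_i substx_None (rls_x l (mem_head _ _)) orbT.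
Qed.

Section Focusing.
Variables (l0 a0 : T) (L' : seq T).
Hypotheses (a0_L' : a0 \in L') (HJ_L' : HJ_property L').
Let L := l0 :: L'.

Let sub_L' : {subset L' <= L} := @sub_cons _ l0 L'.

Fixpoint focused (C : eqType) (chi : seq T -> C) rls : Prop :=
  if rls is l :: r then
    (forall p, size p = sumn (map size r) -> all (mem L) p ->
       forall a, a \in L' -> chi (p ++ subst l a) = chi (p ++ subst l a0)) /\
    focused (fun w => chi (w ++ subst l a0)) r
  else True.

(* For every q, every colouring of the long enough words over L admits q
   focused lines over L' (the induction on q uses HJ for L', colouring a line
   by the colours of all its extensions). *)
Lemma focused_blocks q (C : eqType) (cols : seq C) : exists N,
  forall chi : seq T -> C,
    (forall b, size b = N -> all (mem L) b -> chi b \in cols) ->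
    exists rls, [/\ size rls = q, forall l, l \in rls -> over_alph L' l /\ None \in l,
                   sumn (map size rls) = N & focused chi rls].
Proof.
elim: q C cols => [|q IH] C cols; first by exists 0 => chi _; exists [::].
have [Nq blocks_Nq] := IH C cols.
pose P := words_of L Nq.
have [n HJ_n] := HJ_L' (words_of cols (size P)).
exists (Nq + n) => chi chi_cols.
pose chi1 x := [seq chi (p ++ x) | p <- P].
have [l [size_l l_L' l_x chi1_l]] : exists c, [/\ size c = n, over_alph L' c, None \in c &
    forall a a', a \in L' -> a' \in L' -> chi1 (subst c a) = chi1 (subst c a')].
  apply: HJ_n => b size_b b_L'; rewrite mem_words_of size_map eqxx /=.
  apply/allP=> y /mapP[p]; rewrite mem_words_of => /andP[/eqP size_p p_L] ->.
  apply: chi_cols; first by rewrite size_cat size_p size_b.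
  by rewrite all_cat p_L /=; apply/allP=> x x_b; apply: sub_L'; apply: (allP b_L').
have chi_a0_cols : forall b, size b = Nq -> all (mem L) b -> chi (b ++ subst l a0) \in cols.
  move=> b size_b b_L; apply: chi_cols; first by rewrite size_cat size_subst size_b size_l.
  rewrite all_cat b_L /=; apply/allP=> x x_l; apply: sub_L'.
  exact: (allP (over_alph_subst l_L' a0_L')).
have [rls [size_rls rls_lines size_N foc]] := blocks_Nq _ chi_a0_cols.
exists (l :: rls); split=> /=.
- by rewrite size_rls.
- by move=> l1; rewrite inE => /orP[/eqP ->|]; [split | apply: rls_lines].
- by rewrite size_N size_l addnC.
split=> // p size_p p_L a a_L'.
have p_P : p \in P by rewrite mem_words_of size_p size_N eqxx.
have := chi1_l _ _ a_L' a0_L'; rewrite /chi1 => /(congr1 (nth (chi [::]) ^~ (index p P))).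
by rewrite !(nth_map [::]) ?index_mem // nth_index.
Qed.

Lemma focused_fill (C : eqType) rls : forall (chi : seq T -> C), focused chi rls ->
  (forall l, l \in rls -> over_alph L' l) ->
  forall i j g, i <= j -> j <= size rls ->
  (forall m, m < i -> g m \in L) -> (forall m, i <= m < j -> g m \in L') ->
  (forall m, j <= m < size rls -> g m = a0) ->
  chi (fill g rls) = chi (fill (fun m => if m < i then g m else a0) rls).
Proof.
elim: rls => [|l r IH] chi //= [foc_l foc_r] rls_L' i j g le_ij le_j g_lo g_mid g_hi.
have r_L' : forall l1, l1 \in r -> over_alph L' l1.
  by move=> l1 l1_r; apply: rls_L'; rewrite inE l1_r orbT.
case: (leqP j (size r)) => [le_jr|lt_rj].
  (* the last block is already filled with a0 *)
  rewrite g_hi ?le_jr ?leqnn // ifN; last by rewrite -leqNgt (leq_trans le_ij le_jr).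
  apply: (IH _ foc_r r_L' i j) => // m /andP[le_jm lt_m]; apply: g_hi.
  by rewrite le_jm ltnW.
have j_eq : j = (size r).+1 by apply/eqP; rewrite eqn_leq le_j lt_rj.
case: (leqP i (size r)) => [le_ir|lt_ri]; last first.
  (* no block is refilled *)
  have i_eq : i = (size r).+1 by apply/eqP; rewrite eqn_leq lt_ri (leq_trans le_ij le_j).
  by congr chi; congr (_ ++ _); apply: eq_fill => m lt_m; rewrite i_eq ltnS ltnW.
(* refill the last block using focusing, then the others by induction *)
rewrite foc_l; first last.
- by apply: g_mid; rewrite le_ir j_eq ltnSn.
- apply: fill_over => [l1 l1_r|m lt_m]; first by apply: over_alph_sub sub_L' _; apply: r_L'.
  case: (ltnP m i) => [lt_mi|le_im]; first exact: g_lo.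
  by apply: sub_L'; apply: g_mid; rewrite le_im j_eq ltnS ltnW.
- by rewrite size_fill.
apply: (IH _ foc_r r_L' i (size r)) => // m /andP[le_im lt_m].
  by apply: g_mid; rewrite le_im j_eq ltnS ltnW.
by rewrite ltnNge le_im in lt_m.
Qed.

Definition point rls n := fill (fun m => if m < n then l0 else a0) rls.
Definition gline i j m := if m < i then Some l0 else if m < j then None else Some a0.

Lemma gline_L i j m b : gline i j m = Some b -> b \in L.
Proof.
rewrite /gline; case: ifP => _; first by case=> <-; rewrite mem_head.
by case: ifP => // _ [<-]; apply: sub_L'.
Qed.

(* On focused blocks, the line through two points of the same colour is
   monochromatic: letters of L' give the colour of point i (by focusing),
   and l0 gives point j. *)
Lemma focused_line (C : eqType) (chi : seq T -> C) rls i j : focused chi rls ->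
  (forall l, l \in rls -> over_alph L' l) -> i < j -> j <= size rls ->
  chi (point rls i) = chi (point rls j) ->
  forall a, a \in L -> chi (subst (fillx (gline i j) rls) a) = chi (point rls i).
Proof.
move=> foc rls_L' lt_ij le_j same_ij a a_L; rewrite subst_fillx.
case: (boolP (a \in L')) => a_L'.
  rewrite (focused_fill foc rls_L' (ltnW lt_ij) le_j).
  + by congr chi; apply: eq_fill => m _; rewrite /gline; case: (m < i).
  + by move=> m lt_mi; rewrite /gline lt_mi mem_head.
  + by move=> m /andP[le_im lt_mj]; rewrite /gline ltnNge le_im /= lt_mj.
  move=> m /andP[le_jm _]; rewrite /gline ltnNge (leq_trans (ltnW lt_ij) le_jm) /=.
  by rewrite ltnNge le_jm.
move: a_L; rewrite inE (negbTE a_L') orbF => /eqP ->; rewrite same_ij.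
congr chi; apply: eq_fill => m _; rewrite /gline; case: ifP => lt_mi.
  by rewrite (ltn_trans lt_mi lt_ij).
by case: ifP.
Qed.
End Focusing.

Theorem hales_jewett L : HJ_property L.
Proof.
elim: L => [|l0 L' IH] C cols.
  by exists 1 => chi _; exists [:: None].
case: L' IH => [|a0 L''] IH.
  exists 1 => chi _; exists [:: None]; split=> // a a'.
  by rewrite !inE => /eqP -> /eqP ->.
set L' := a0 :: L''; have a0_L' : a0 \in L' by rewrite inE eqxx.
have [N blocks_N] := focused_blocks l0 a0_L' IH (size cols) cols.
exists N => chi chi_cols.
have [rls [size_rls rls_lines size_N foc]] := blocks_N chi chi_cols.
(* two of the size cols + 1 points have the same colour, and the line
   through them is monochromatic *)
have rls_L' : forall l, l \in rls -> over_alph L' l by move=> l /rls_lines[].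
have [i [j [lt_ij le_j same_ij]]] : exists i j,
    [/\ i < j, j <= size cols & chi (point l0 a0 rls i) = chi (point l0 a0 rls j)].
  apply: pigeonhole => n _; apply: chi_cols; first by rewrite size_fill.
  apply: fill_over => [l /rls_L'|m _]; first exact: over_alph_sub sub_cons.
  by rewrite inE; case: ifP => _; rewrite ?eqxx ?a0_L' ?orbT.
have le_j' : j <= size rls by rewrite size_rls.
exists (fillx (gline l0 a0 i j) rls); split.
- by rewrite size_fillx.
- apply: fillx_over => [l /rls_L'|]; [exact: over_alph_sub sub_cons | exact: gline_L].
- apply: (fillx_has_x (i := i)); first by move=> l /rls_lines[].
    exact: leq_trans lt_ij le_j'.
  by rewrite /gline ltnn lt_ij.
by move=> a a' a_L a'_L; rewrite !(focused_line foc rls_L' lt_ij le_j' same_ij).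
Qed.

Definition lines L N := [seq c <- words_of (None :: map Some L) N | None \in c].

Lemma mem_lines L N c : (c \in lines L N) = [&& None \in c, size c == N & over_alph L c].
Proof. by rewrite mem_filter mem_words_of over_alphE. Qed.

Lemma HJ_family (Lam : seq T) (n : nat) : exists2 N, 0 < N &
  forall Q : nat -> seq T -> Prop, exists2 c, c \in lines Lam N &
    forall j a a', j < n -> a \in Lam -> a' \in Lam -> Q j (subst c a) -> Q j (subst c a').
Proof.
have [N HJ_N] := hales_jewett Lam (words_of [:: true; false] n).
have HJ_Q : forall Q : nat -> seq T -> Prop, exists2 c, c \in lines Lam N &
    forall j a a', j < n -> a \in Lam -> a' \in Lam -> Q j (subst c a) -> Q j (subst c a').
  move=> Q; pose chi b := [seq holds (Q j b) | j <- iota 0 n].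
  have [|c [size_c c_Lam c_x chi_c]] := HJ_N chi.
    move=> b _ _; rewrite mem_words_of size_map size_iota eqxx.
    by apply/allP=> -[] _; rewrite !inE.
  exists c; first by rewrite mem_lines c_x size_c eqxx.
  move=> j a a' lt_jn a_L a'_L /holdsP Qa; apply/holdsP.
  have := chi_c a a' a_L a'_L; rewrite /chi => /(congr1 (nth false ^~ j)).
  by rewrite !(nth_map 0) ?size_iota // nth_iota // => <-.
exists N => //; have [c] := HJ_Q (fun _ _ => True).
by rewrite mem_lines => /and3P[c_x /eqP <- _]; case: c c_x.
Qed.
End HalesJewett.

(* Words spanned by a sequence s are described by index lists: the list
   js = [:: (n_0, a_0); ...; (n_j, a_j)] stands for s_{n_0}(a_0) ... s_{n_j}(a_j).
   [idx_in k' lo hi js] says that the indices increase, lie in [lo, hi), and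
   that each letter a_i is x or belongs to A (k' + n_i), as in the spans. *)
Section IndexLists.
Variables (T : eqType) (A : nat -> seq T).
Hypothesis A_incr : forall n, {subset A n <= A n.+1}.
Implicit Types (s t : vseqs T) (js : seq (nat * option T)) (cs : seq (nat * T)).

Lemma A_mono i j : i <= j -> {subset A i <= A j}.
Proof.
move=> /subnK <-; elim: (j - i) => [|d IH] b b_A //.
by rewrite addSn; apply: A_incr; apply: IH.
Qed.

Definition vcat s js : vword T := flatten [seq substx (s q.1) q.2 | q <- js].
Definition ccat s cs : seq T := flatten [seq subst (s q.1) q.2 | q <- cs].
Definition lift_idx cs := [seq (q.1, Some q.2) | q <- cs].
Definition shift M s : vseqs T := fun n => s (M + n).
Definition shift_idx (X : Type) M (js : seq (nat * X)) := [seq (M + q.1, q.2) | q <- js].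
Definition is_var (q : nat * option T) := q.2 == None.
Definition letter_ok k' (q : nat * option T) := if q.2 is Some b then b \in A (k' + q.1) else true.
Definition idx_in k' lo hi js :=
  sorted ltn (map fst js) && all (fun q => (lo <= q.1 < hi) && letter_ok k' q) js.

Lemma vcat_cat s js1 js2 : vcat s (js1 ++ js2) = vcat s js1 ++ vcat s js2.
Proof. by rewrite /vcat map_cat flatten_cat. Qed.

Lemma ccat_cat s cs1 cs2 : ccat s (cs1 ++ cs2) = ccat s cs1 ++ ccat s cs2.
Proof. by rewrite /ccat map_cat flatten_cat. Qed.

Lemma substx_vcat s js o :
  substx (vcat s js) o = vcat s [seq (q.1, ocomp q.2 o) | q <- js].
Proof. by elim: js => //= q js IH; rewrite substx_cat IH substx_substx. Qed.

Lemma subst_vcat s js a : subst (vcat s js) a = ccat s [seq (q.1, odflt a q.2) | q <- js].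
Proof. by elim: js => //= q js IH; rewrite subst_cat IH subst_substx. Qed.

Lemma ccat_lift s cs : map Some (ccat s cs) = vcat s (lift_idx cs).
Proof. by elim: cs => //= q js IH; rewrite map_cat IH map_Some_subst. Qed.

Lemma vcat_shift M s js : vcat (shift M s) js = vcat s (shift_idx M js).
Proof. by elim: js => // q js IH; exact: (congr1 (cat _) IH). Qed.

Lemma ccat_rcons s cs q : ccat s (rcons cs q) = ccat s cs ++ subst (s q.1) q.2.
Proof. by rewrite -cats1 ccat_cat /ccat /= cats0. Qed.

Lemma shift_shift M B s : shift B (shift M s) = shift (M + B) s.
Proof. by apply: functional_extensionality => n; rewrite /shift addnA. Qed.

Lemma ccat_shift M s cs : ccat (shift M s) cs = ccat s (shift_idx M cs).
Proof. by elim: cs => // q cs IH; exact: (congr1 (cat _) IH). Qed.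

Lemma lift_of_all_Some js :
  all (fun q => q.2 != None) js -> exists cs, js = lift_idx cs.
Proof.
elim: js => [|[n [a|]] js IH] //=; first by exists [::].
by case/IH=> cs ->; exists ((n, a) :: cs).
Qed.

Lemma idx_inP k' lo hi js : reflect
  (sorted ltn (map fst js) /\ forall q, q \in js -> lo <= q.1 < hi /\ letter_ok k' q)
  (idx_in k' lo hi js).
Proof.
apply: (iffP andP) => -[S /= H]; split=> //; first by move=> q /(allP H) /andP.
by apply/allP=> q /H[-> ->].
Qed.

Lemma idx_in_cat k' lo mid hi js1 js2 : lo <= mid -> mid <= hi ->
  idx_in k' lo mid js1 -> idx_in k' mid hi js2 -> idx_in k' lo hi (js1 ++ js2).
Proof.
move=> le_lo le_hi /idx_inP[S1 H1] /idx_inP[S2 H2]; apply/idx_inP; split.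
  rewrite map_cat; apply/sorted_catP; split=> // x y /mapP[q1 /H1[/andP[_ lt1] _] ->].
  by move=> /mapP[q2 /H2[/andP[le2 _] _] ->]; apply: leq_trans lt1 le2.
move=> q; rewrite mem_cat => /orP[/H1|/H2] [/andP[le lt] ok]; split=> //.
  by rewrite le (leq_trans lt).
by rewrite lt (leq_trans le_lo).
Qed.

Lemma idx_in_rcons k' lo hi js q : idx_in k' lo hi (rcons js q) ->
  [/\ idx_in k' lo q.1 js, lo <= q.1 < hi & letter_ok k' q].
Proof.
move=> /idx_inP[S H]; have [range ok] : lo <= q.1 < hi /\ letter_ok k' q.
  by apply: H; rewrite mem_rcons mem_head.
move: S; rewrite map_rcons -cats1 => /sorted_catP[S _ lt_q]; split=> //.
apply/idx_inP; split=> // p p_js; have [/andP[le _] ok_p] : lo <= p.1 < hi /\ letter_ok k' p.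
  by apply: H; rewrite mem_rcons inE p_js orbT.
by rewrite le lt_q ?mem_head // map_f.
Qed.

Lemma idx_in_widen k' lo hi lo' hi' js : lo' <= lo -> hi <= hi' ->
  idx_in k' lo hi js -> idx_in k' lo' hi' js.
Proof.
move=> le_lo le_hi /idx_inP[S H]; apply/idx_inP; split=> // q /H[/andP[le lt] ok].
by rewrite (leq_trans le_lo le) (leq_trans lt le_hi).
Qed.

Lemma idx_in_fill k' lo hi js a : idx_in k' lo hi js -> a \in A (k' + lo) ->
  idx_in k' lo hi (lift_idx [seq (q.1, odflt a q.2) | q <- js]).
Proof.
move=> /idx_inP[S H] a_A; apply/idx_inP; split; first by rewrite /lift_idx -!map_comp.
move=> _ /mapP[_ /mapP[q /H[range ok] ->] ->]; split=> //=.
move: ok; rewrite /letter_ok /=; case: q.2 => //= _; apply: A_mono a_A.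
by rewrite leq_add2l; case/andP: range.
Qed.

Lemma idx_in_shift k0 M lo hi js :
  idx_in (k0 + M) lo hi js = idx_in k0 (M + lo) (M + hi) (shift_idx M js).
Proof.
rewrite /idx_in /shift_idx all_map; congr andb.
  have -> : [seq q.1 | q <- [seq (M + q.1, q.2) | q <- js]] = map (addn M) (map fst js).
    by rewrite -!map_comp.
  rewrite [in RHS]sorted_map; case: (map fst js) => //= n l.
  by apply: eq_path => a b /=; rewrite ltn_add2l.
by apply: eq_all => -[n o] /=; rewrite leq_add2l ltn_add2l /letter_ok /= addnA.
Qed.

Lemma unshift_idx M js : (forall q, q \in js -> M <= q.1) ->
  js = shift_idx M [seq (q.1 - M, q.2) | q <- js].
Proof.
move=> le_M; rewrite /shift_idx -map_comp -[LHS]map_id.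
by apply/eq_in_map => -[n o] /le_M /= le; rewrite subnKC.
Qed.

Lemma idx_in_level k1 k2 lo hi js : k1 <= k2 -> idx_in k1 lo hi js -> idx_in k2 lo hi js.
Proof.
move=> le_k /idx_inP[S H]; apply/idx_inP; split=> // q /H[-> ok]; split=> //.
by move: ok; rewrite /letter_ok; case: q.2 => // b; apply: A_mono; rewrite leq_add2r.
Qed.

Lemma vspanE s k' lo hi w :
  vspan s (fun n => lo <= n < hi) (fun n => A (k' + n)) w <->
  exists js, [/\ idx_in k' lo hi js, has is_var js & w = vcat s js].
Proof.
split=> [[js [_ [S [H [x_js ->]]]]]|[js [/idx_inP[S H] x_js ->]]].
  exists js; split=> //; apply/idx_inP; split=> // q /H[lt ok].
  by split=> //; rewrite /letter_ok; case: q.2 ok.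
exists js; split; first by case: (js) x_js.
split=> //; split=> [q /H[lt ok]|//]; split=> //.
by move: ok; rewrite /letter_ok; case: q.2.
Qed.

Lemma cspanE s k' z : cspan s (fun _ => True) (fun n => A (k' + n)) z <->
  exists cs hi, [/\ cs != [::], idx_in k' 0 hi (lift_idx cs) & z = ccat s cs].
Proof.
split=> [[cs [ne [S [H ->]]]]|[cs [hi [ne /idx_inP[S H] ->]]]].
  exists cs, (\max_(q <- cs) q.1).+1; split=> //; apply/idx_inP.
  split=> [|_ /mapP[q q_cs ->]]; first by rewrite /lift_idx -map_comp.
  by rewrite /= ltnS (leq_bigmax_seq q q_cs) //; have [] := H q q_cs.
exists cs; split=> //; split; first by move: S; rewrite /lift_idx -map_comp.
by split=> // q q_cs; have [_] := H _ (map_f (fun q => (q.1, Some q.2)) q_cs).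
Qed.
End IndexLists.
Arguments is_var {T}.

Section ExtractedSequences.
Variables (T : eqType) (A : nat -> seq T).
Hypothesis A_incr : forall n, {subset A n <= A n.+1}.
Implicit Types (s t : vseqs T) (js : seq (nat * option T)) (cs : seq (nat * T)).

Lemma vspan_widen s k' lo hi lo' hi' w : lo' <= lo -> hi <= hi' ->
  vspan s (fun n => lo <= n < hi) (fun n => A (k' + n)) w ->
  vspan s (fun n => lo' <= n < hi') (fun n => A (k' + n)) w.
Proof.
move=> le_lo le_hi /vspanE[js [in_js x_js ->]]; apply/vspanE; exists js; split=> //.
exact: idx_in_widen in_js.
Qed.

Lemma vspan_shift s k0 M lo hi w :
  vspan (shift M s) (fun n => lo <= n < hi) (fun n => A (k0 + M + n)) w <->
  vspan s (fun n => M + lo <= n < M + hi) (fun n => A (k0 + n)) w.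
Proof.
split=> /vspanE[js [in_js x_js ->]]; apply/vspanE.
  exists (shift_idx M js); split; first by rewrite -idx_in_shift.
    by rewrite has_map.
  exact: vcat_shift.
have M_le : forall q, q \in js -> M <= q.1.
  by move/idx_inP: (in_js) => [_ H] q /H[/andP[le _] _]; apply: leq_trans (leq_addr lo M) le.
rewrite (unshift_idx M_le) in in_js x_js *; exists [seq (q.1 - M, q.2) | q <- js].
by rewrite idx_in_shift -vcat_shift; rewrite has_map in x_js.
Qed.

Lemma vspan_vword s I k' w : is_vseq A s ->
  vspan s I (fun n => A (k' + n)) w -> is_vword A w.
Proof.
move=> s_vseq [js [_ [_ [H [x_js ->]]]]]; split.
  case/hasP: x_js => q q_js /eqP q_x; apply/flattenP; exists (substx (s q.1) q.2).
    exact: map_f.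
  by rewrite q_x substx_None; case: (s_vseq q.1).
move=> b /flattenP [_ /mapP[q q_js ->]] /mapP[[b'|] o_s].
  by case=> ->; case: (s_vseq q.1) => _; apply.
by have [_] := H q q_js; case: q.2 => // a a_A [->]; exists (k' + q.1).
Qed.

Lemma cspan_widen t I (B1 B2 : nat -> seq T) z :
  (forall n, {subset B1 n <= B2 n}) -> cspan t I B1 z -> cspan t I B2 z.
Proof.
move=> sB [cs [ne [S [H ->]]]]; exists cs; do 3!split=> //.
by move=> q /H[I_q B1_q]; split=> //; apply: sB.
Qed.

(* Constant words spanned by the block [lo, hi) of s, the empty word included. *)
Definition cspan_in s k' lo hi z := exists cs, idx_in A k' lo hi (lift_idx cs) /\ z = ccat s cs.

Lemma vspan_cat_l s k' lo mid hi p w : lo <= mid -> mid <= hi ->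
  cspan_in s k' lo mid p ->
  vspan s (fun n => mid <= n < hi) (fun n => A (k' + n)) w ->
  vspan s (fun n => lo <= n < hi) (fun n => A (k' + n)) (map Some p ++ w).
Proof.
move=> le_lo le_hi [cs [in_cs ->]] /vspanE[js [in_js x_js ->]].
apply/vspanE; exists (lift_idx cs ++ js); split.
- exact: idx_in_cat in_cs in_js.
- by rewrite has_cat x_js orbT.
by rewrite vcat_cat ccat_lift.
Qed.

Lemma vspan_cat_r s k' lo mid hi w z : lo <= mid -> mid <= hi ->
  vspan s (fun n => lo <= n < mid) (fun n => A (k' + n)) w ->
  cspan_in s k' mid hi z ->
  vspan s (fun n => lo <= n < hi) (fun n => A (k' + n)) (w ++ map Some z).
Proof.
move=> le_lo le_hi /vspanE[js [in_js x_js ->]] [cs [in_cs ->]].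
apply/vspanE; exists (js ++ lift_idx cs); split.
- exact: idx_in_cat in_js in_cs.
- by rewrite has_cat x_js.
by rewrite vcat_cat ccat_lift.
Qed.

Lemma cspan_in_app s k' lo mid hi p w a : lo <= mid -> mid <= hi ->
  cspan_in s k' lo mid p ->
  vspan s (fun n => mid <= n < hi) (fun n => A (k' + n)) w -> a \in A (k' + mid) ->
  cspan_in s k' lo hi (p ++ subst w a).
Proof.
move=> le_lo le_hi [cs [in_cs ->]] /vspanE[js [in_js _ ->]] a_A.
exists (cs ++ [seq (q.1, odflt a q.2) | q <- js]); split; last by rewrite ccat_cat subst_vcat.
by rewrite /lift_idx map_cat; apply: idx_in_cat in_cs (idx_in_fill A_incr in_js a_A).
Qed.

Lemma cspan_in_shift s k0 M lo hi z :
  cspan_in (shift M s) (k0 + M) lo hi z -> cspan_in s k0 (M + lo) (M + hi) z.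
Proof.
case=> cs [in_cs ->]; exists (shift_idx M cs); split; last exact: ccat_shift.
have -> : lift_idx (shift_idx M cs) = shift_idx M (lift_idx cs).
  by rewrite /lift_idx /shift_idx -!map_comp.
by rewrite -idx_in_shift.
Qed.

Section Cuts.
Variables (J : nat) (m : nat -> nat).
Hypothesis m_lt : forall i, i < J -> m i < m i.+1.

Lemma cut_mono a b : a <= b -> b <= J -> m a <= m b.
Proof.
move=> le_ab; elim: b le_ab => [|b IH]; first by rewrite leqn0 => /eqP ->.
rewrite leq_eqVlt => /orP[/eqP -> //|]; rewrite ltnS => le_ab lt_bJ.
exact: leq_trans (IH le_ab (ltnW lt_bJ)) (ltnW (m_lt lt_bJ)).
Qed.

Lemma cut_smono a b : a < b -> b <= J -> m a < m b.
Proof.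
move=> lt_ab le_bJ.
exact: leq_trans (m_lt (leq_trans lt_ab le_bJ)) (cut_mono lt_ab le_bJ).
Qed.

Lemma cut_ge i : i <= J -> i <= m i.
Proof. by elim: i => // i IH lt_iJ; apply: leq_ltn_trans (IH (ltnW lt_iJ)) (m_lt lt_iJ). Qed.

Variables (k' : nat) (t s' : vseqs T).
Hypothesis t_blocks : forall i, i < J ->
  vspan s' (fun n => m i <= n < m i.+1) (fun n => A (k' + n)) (t i).

Lemma block_subst i o : i < J -> letter_ok A k' (i, o) ->
  exists bl, [/\ substx (t i) o = vcat s' bl, bl != [::],
    idx_in A k' (m i) (m i.+1) bl, o = None -> has is_var bl &
    o != None -> all (fun q => q.2 != None) bl].
Proof.
move=> lt_iJ ok_o; have /vspanE [jsp [/idx_inP[S H] x_p ->]] := t_blocks lt_iJ.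
exists [seq (q.1, ocomp q.2 o) | q <- jsp]; split.
- exact: substx_vcat.
- by case: (jsp) x_p.
- apply/idx_inP; split; first by rewrite -map_comp.
  move=> _ /mapP[q /H[range ok] ->]; split=> //=.
  move: ok ok_o; rewrite /letter_ok /=; case: q.2 => //= _; case: o => //= a.
  apply: (A_mono A_incr); rewrite leq_add2l (leq_trans (cut_ge (ltnW lt_iJ))) //.
  by case/andP: range.
- by move=> ->; rewrite has_map; apply: sub_has x_p => -[n [b|]].
by case: o {ok_o} => // a _; apply/allP=> _ /mapP[q _ ->]; case: q.2.
Qed.

Lemma compose lo hi js : hi <= J -> idx_in A k' lo hi js ->
  exists js', [/\ vcat t js = vcat s' js', idx_in A k' (m lo) (m hi) js',
    has is_var js -> has is_var js', js != [::] -> js' != [::] &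
    all (fun q => q.2 != None) js -> all (fun q => q.2 != None) js'].
Proof.
move=> le_hiJ; elim: js lo => [|p js IH] lo /=; first by exists [::].
move=> /idx_inP[S H]; have [/andP[le_lo lt_hi] ok_p] := H p (mem_head _ _).
have lt_pJ : p.1 < J := leq_trans lt_hi le_hiJ.
have [bl [E_bl ne_bl in_bl x_bl some_bl]] := block_subst lt_pJ ok_p.
have in_js : idx_in A k' p.1.+1 hi js.
  apply/idx_inP; split=> [|q q_js]; first exact: path_sorted S.
  have [/andP[_ ->] ->] := H q (sub_cons _ q_js); split=> //; rewrite andbT.
  by apply: (allP (order_path_min ltn_trans S)); apply: map_f.
have [js1 [E1 in1 x1 _ some1]] := IH _ in_js.
exists (bl ++ js1); split.
- by rewrite vcat_cat -E_bl -E1.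
- apply: idx_in_widen (cut_mono le_lo (ltnW lt_pJ)) (leqnn _) _.
  by apply: idx_in_cat in_bl in1; apply: cut_mono.
- by rewrite has_cat => /orP[/eqP/x_bl -> //|/x1 ->]; rewrite orbT.
- by case: (bl) ne_bl.
by case/andP=> /some_bl some_b /some1 some_1; rewrite all_cat some_b.
Qed.
End Cuts.

Definition blocks k' t s' J B := exists m, [/\ m 0 = 0, m J = B,
  forall i, i < J -> m i < m i.+1 &
  forall i, i < J -> vspan s' (fun n => m i <= n < m i.+1) (fun n => A (k' + n)) (t i)].

Lemma blocks_vcompose k' t s' J B js : blocks k' t s' J B -> idx_in A k' 0 J js ->
  exists js', [/\ vcat t js = vcat s' js', idx_in A k' 0 B js',
    has is_var js -> has is_var js', js != [::] -> js' != [::] &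
    all (fun q => q.2 != None) js -> all (fun q => q.2 != None) js'].
Proof.
by case=> m [m0 mJ m_lt t_bl] in_js; have := compose m_lt t_bl (leqnn J) in_js; rewrite m0 mJ.
Qed.

Lemma blocks_ccompose k' t s' J B cs : blocks k' t s' J B -> idx_in A k' 0 J (lift_idx cs) ->
  exists cs', [/\ ccat t cs = ccat s' cs', idx_in A k' 0 B (lift_idx cs') &
    cs != [::] -> cs' != [::]].
Proof.
move=> t_bl in_cs; have [js' [E in' _ ne some]] := blocks_vcompose t_bl in_cs.
have [|cs' def_js'] := @lift_of_all_Some _ js'.
  by apply: some; apply/allP => _ /mapP[? _ ->].
subst js'; exists cs'; split=> //.
  by apply: (inj_map Some_inj); rewrite !ccat_lift.
by case: cs {in_cs E some} ne => // c cs /(_ isT); case: (cs').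
Qed.

Lemma extracted_refl k' s : extracted A k' s s.
Proof.
move=> l; exists id; split=> //; split=> // i _.
apply/vspanE; exists [:: (i, None)]; split=> //=; last by rewrite /vcat /= substx_None cats0.
by rewrite /idx_in /= leqnn ltnSn.
Qed.

Lemma extracted_blocks k' t s' J : extracted A k' t s' -> 0 < J ->
  exists B, blocks k' t s' J B.
Proof.
move=> t_s'; case: J => // J _; have [m [m0 [m_lt t_bl]]] := t_s' J.
by exists (m J.+1), m.
Qed.

Lemma extracted_trans k' t2 t1 s' :
  extracted A k' t2 t1 -> extracted A k' t1 s' -> extracted A k' t2 s'.
Proof.
move=> t2_t1 t1_s' l; have [m2 [m2_0 [m2_lt t2_bl]]] := t2_t1 l.
have [B [m1 [m1_0 _ m1_lt t1_bl]]] :=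
  extracted_blocks t1_s' (leq_ltn_trans (leq0n _) (m2_lt l (leqnn l))).
have le_m2 : forall i, i <= l.+1 -> m2 i <= m2 l.+1.
  by move=> i le_il; apply: (@cut_mono l.+1 m2 m2_lt) le_il (leqnn _).
exists (m1 \o m2); split; first by rewrite /= m2_0.
split=> i le_il; first by apply: (cut_smono m1_lt); [apply: m2_lt | apply: le_m2].
have /vspanE [js [in_js x_js ->]] := t2_bl i le_il.
have [js' [E in' x' _ _]] := compose m1_lt t1_bl (le_m2 i.+1 le_il) in_js.
by apply/vspanE; exists js'; split; auto.
Qed.

Lemma cspan_extracted k' t2 t1 z : extracted A k' t2 t1 ->
  cspan t2 (fun _ => True) (fun n => A (k' + n)) z ->
  cspan t1 (fun _ => True) (fun n => A (k' + n)) z.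
Proof.
move=> t2_t1 /cspanE[cs [hi [ne in_cs ->]]].
have [B t_bl] := extracted_blocks t2_t1 (ltn0Sn hi).
have [cs' [E in' ne']] := blocks_ccompose t_bl (idx_in_widen (leqnn 0) (leqnSn hi) in_cs).
by apply/cspanE; exists cs', B; rewrite E; split=> //; apply: ne'.
Qed.

(* Extraction from the tail of s at level k0 + M gives extraction from s at
   level k0 (the first block absorbs s_0 .. s_{M-1}). *)
Lemma extracted_unshift k0 M t s :
  extracted A (k0 + M) t (shift M s) -> extracted A k0 t s.
Proof.
move=> t_s l; have [m [m0 [m_lt t_bl]]] := t_s l.
exists (fun i => if i is 0 then 0 else M + m i); split=> //; split=> [[|i]|i] le_il /=.
- by apply: leq_trans (leq_addl M _); have := m_lt 0 le_il; rewrite m0.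
- by rewrite ltn_add2l m_lt.
apply: vspan_widen _ (leqnn _) ((vspan_shift _ _ _ _ _ _).1 (t_bl i le_il)).
by case: i {le_il}.
Qed.

Lemma tail_extracted k' t s' J l B m : (forall i, i <= J + l -> m i < m i.+1) ->
  (forall i, i <= J + l ->
     vspan s' (fun n => m i <= n < m i.+1) (fun n => A (k' + n)) (t i)) ->
  B <= m J -> fin_extracted A (k' + B) l (shift J t) (shift B s').
Proof.
move=> m_lt t_bl le_B.
have le_Bm : forall i, i <= l.+1 -> B <= m (J + i).
  move=> i le_i; apply: leq_trans le_B (@cut_mono (J + l).+1 m m_lt _ _ (leq_addr _ _) _).
  by rewrite -addnS leq_add2l.
have m_ltJ : forall i, i <= l -> m (J + i) < m (J + i.+1).
  by move=> i le_il; rewrite addnS; apply: m_lt; rewrite leq_add2l.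
exists (fun i => if i is 0 then 0 else m (J + i) - B); split=> //; split=> [[|i]|i] le_il.
- by rewrite subn_gt0; apply: leq_ltn_trans le_B _; rewrite -{1}(addn0 J) m_ltJ.
- have lt_m := m_ltJ i.+1 le_il.
  exact: ltn_sub2r (leq_ltn_trans (le_Bm i.+1 (leqW le_il)) lt_m) lt_m.
apply/vspan_shift; rewrite subnKC ?le_Bm //.
apply: vspan_widen _ _ (t_bl (J + i) _); last by rewrite leq_add2l.
- by case: i le_il => [|i] le_il; rewrite ?addn0 // subnKC // le_Bm // ltnW.
by rewrite addnS.
Qed.

(* Since
   the witnesses of extraction depend on their length, B is chosen least. *)
Lemma extracted_split k' t s' J : extracted A k' t s' -> 0 < J ->
  exists B, [/\ J <= B, blocks k' t s' J B & extracted A (k' + B) (shift J t) (shift B s')].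
Proof.
move=> t_s' J_gt0.
have [B [t_bl min_B]] := exists_min (extracted_blocks t_s' J_gt0).
exists B; split=> //.
  by case: t_bl => m [_ <- m_lt _]; apply: cut_ge m_lt _ (leqnn J).
move=> l; have [m [m0 [m_lt t_blm]]] := t_s' (J + l).
have le_JJl : forall i, i < J -> i <= J + l by move=> i /ltnW /leq_trans; apply; apply: leq_addr.
apply: (tail_extracted m_lt t_blm); apply: min_B; exists m; split=> // i lt_iJ.
  exact: m_lt (le_JJl i lt_iJ).
exact: t_blm (le_JJl i lt_iJ).
Qed.
End ExtractedSequences.

Lemma mem_zip2 (X Y : eqType) (l1 : seq X) (l2 : seq Y) x y :
  (x, y) \in zip l1 l2 -> x \in l1 /\ y \in l2.
Proof.
elim: l1 l2 => [|a l1 IH] [|b l2] //= /predU1P[[-> ->]|/IH[x_l1 y_l2]].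
  by rewrite !mem_head.
by rewrite !inE x_l1 y_l2 !orbT.
Qed.

Lemma map_pair_zip (X Y Z : Type) (l1 : seq X) (l2 : seq Y) (f : Y -> Z) :
  [seq (q.1, f q.2) | q <- zip l1 l2] = zip l1 (map f l2).
Proof. by elim: l1 l2 => [|x l1 IH] [|y l2] //=; rewrite IH. Qed.

Section Lines.
Variables (T : eqType) (A : nat -> seq T).
Hypothesis A_incr : forall n, {subset A n <= A n.+1}.

Implicit Types (s t : vseqs T) (c : vword T).

Definition line t c : vword T := vcat t (zip (iota 0 (size c)) c).

Lemma subst_line t c a : subst (line t c) a = ccat t (zip (iota 0 (size c)) (subst c a)).
Proof. by rewrite /line subst_vcat map_pair_zip. Qed.

Lemma idx_line k' c : over_alph (A k') c -> idx_in A k' 0 (size c) (zip (iota 0 (size c)) c).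
Proof.
move=> c_A; apply/idx_inP; split.
  by rewrite -/(unzip1 _) unzip1_zip ?size_iota // iota_ltn_sorted.
case=> n o /mem_zip2[n_iota o_c]; split; first by move: n_iota; rewrite mem_iota.
rewrite /letter_ok /=; case: o o_c => // b /(allP c_A) /= b_A.
by apply: (A_mono A_incr) b_A; rewrite leq_addr.
Qed.

Lemma line_has_x c : None \in c -> has is_var (zip (iota 0 (size c)) c).
Proof.
move=> c_x; suff : has (pred1 None) (unzip2 (zip (iota 0 (size c)) c)) by rewrite has_map.
by rewrite unzip2_zip ?size_iota // has_pred1.
Qed.

Lemma line_span s k' M t B c : None \in c -> over_alph (A (k' + M)) c ->
  blocks A (k' + M) t (shift M s) (size c) B ->
  vspan s (fun n => M <= n < M + B) (fun n => A (k' + n)) (line t c).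
Proof.
move=> c_x c_A t_bl.
have [js [E in_js x_js _ _]] := blocks_vcompose A_incr t_bl (idx_line c_A).
apply: (@vspan_widen _ A s k' (M + 0) (M + B) _ _ _ (leq_addr 0 M) (leqnn _)).
apply: (vspan_shift A s k' M 0 B (line t c)).1; apply/vspanE.
by exists js; split=> //; apply/x_js/line_has_x.
Qed.
End Lines.

Section Contradiction.
Variables (T : eqType) (A : nat -> seq T).
Hypothesis A_incr : forall n, {subset A n <= A n.+1}.
Variables (k : nat) (E : seq T -> Prop).
Hypothesis E_W : forall z, E z -> isW A z.
Variable s : vseqs T.
Hypotheses (s_vseq : is_vseq A s) (E_large : large A k E s).

Definition EF (w : vword T) (z : seq T) :=
  E z /\ E_F A E (fun u => exists a, a \in A k /\ u = subst w a) z.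

Hypothesis no_witness : forall m, 1 <= m -> forall w,
  vspan s (fun n => n < m) (fun n => A (k + n)) w -> forall t, is_vseq A t ->
  extracted A (k + m) t (shift m s) -> ~ large A (k + m) (EF w) t.

Lemma avoid_all M (Ws : seq (vword T)) t : 1 <= M ->
  (forall W, W \in Ws -> vspan s (fun n => n < M) (fun n => A (k + n)) W) ->
  is_vseq A t -> extracted A (k + M) t (shift M s) ->
  exists t2, [/\ is_vseq A t2, extracted A (k + M) t2 (shift M s) &
    forall W, W \in Ws -> forall z,
      cspan t2 (fun _ => True) (fun n => A (k + M + n)) z -> ~ EF W z].
Proof.
move=> M_pos + t_vseq t_ext; elim: Ws => [|W Ws IH] Ws_span; first by exists t.
have [t1 [t1_vseq t1_ext t1_avoid]] := IH (fun W' W'_Ws => Ws_span W' (sub_cons _ W'_Ws)).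
(* t1 is not large for EF W: some t2 extracted from t1 avoids EF W *)
have [t2 [t2_vseq t2_t1 t2_avoid]] : exists t2, [/\ is_vseq A t2,
    extracted A (k + M) t2 t1 &
    forall z, cspan t2 (fun _ => True) (fun n => A (k + M + n)) z -> ~ EF W z].
  apply: NNPP => none; apply: (no_witness M_pos (Ws_span W (mem_head _ _)) t1_vseq t1_ext).
  move=> t2 t2_vseq t2_t1; apply: NNPP => no_z; apply: none; exists t2; split=> // z z_t2 EF_z.
  by apply: no_z; exists z.
exists t2; split=> //; first exact: (extracted_trans A_incr t2_t1 t1_ext).
move=> W'; rewrite inE => /predU1P[-> //|W'_Ws z z_t2].
exact: t1_avoid W'_Ws z (cspan_extracted A_incr t2_t1 z_t2).
Qed.

Lemma E_word M t : is_vseq A t -> extracted A (k + M) t (shift M s) ->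
  exists g M' t', [/\ E g /\ cspan t (fun _ => True) (fun n => A (k + n)) g,
    M < M', cspan_in A s k M M' g, is_vseq A t' & extracted A (k + M') t' (shift M' s)].
Proof.
move=> t_vseq t_ext.
have [g [E_g g_t]] := E_large t_vseq (extracted_unshift t_ext).
have /cspanE[cs [hi [_ in_cs def_g]]] := g_t.
have [B [lt_hiB t_bl tail_ext]] := extracted_split t_ext (ltn0Sn hi).
have in_cs' : idx_in A (k + M) 0 hi.+1 (lift_idx cs).
  exact: (idx_in_level A_incr (leq_addr M k) (idx_in_widen (leqnn 0) (leqnSn hi) in_cs)).
have [cs' [E_cs in_cs'' _]] := blocks_ccompose A_incr t_bl in_cs'.
exists g, (M + B), (shift hi.+1 t); split=> //.
- by rewrite -{1}(addn0 M) ltn_add2l (leq_ltn_trans (leq0n hi)).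
- rewrite -[M in cspan_in _ _ _ M]addn0; apply: cspan_in_shift.
  by exists cs'; rewrite def_g E_cs.
- by move=> n; apply: t_vseq.
by rewrite addnA -shift_shift.
Qed.

Lemma bad_letter W g : E g -> ~ EF W g -> exists2 a, a \in A k & ~ E (subst W a ++ g).
Proof.
move=> E_g not_EF; apply: NNPP => no_a; apply: not_EF; do 2!split=> //; first exact: E_W.
by move=> _ [a [a_k ->]]; apply: NNPP => not_E; apply: no_a; exists a.
Qed.

Lemma spoiling_word M (Ws : seq (vword T)) t : 1 <= M ->
  (forall W, W \in Ws -> vspan s (fun n => n < M) (fun n => A (k + n)) W) ->
  is_vseq A t -> extracted A (k + M) t (shift M s) ->
  exists g M' t', [/\ M < M', cspan_in A s k M M' g, is_vseq A t',
    extracted A (k + M') t' (shift M' s) &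
    forall W, W \in Ws -> exists2 a, a \in A k & ~ E (subst W a ++ g)].
Proof.
move=> M_pos Ws_span t_vseq t_ext.
have [t2 [t2_vseq t2_ext t2_avoid]] := avoid_all M_pos Ws_span t_vseq t_ext.
have [g [M' [t' [[E_g g_t2] lt_M g_s t'_vseq t'_ext]]]] := E_word t2_vseq t2_ext.
exists g, M', t'; split=> // W W_Ws; apply: bad_letter E_g (t2_avoid W W_Ws g _).
by apply: cspan_widen g_t2 => n; apply: (A_mono A_incr); rewrite leq_add2r leq_addr.
Qed.

(* Given i <= M, t extracted from the tail of s
   from M on and finitely many constant words P spanned by s below M, there
   are a variable word v of a block [M, M') of s and t' extracted from the
   tail of s from M' on such that no word p v(a), p \in P, a \in A_{k+i}, is
   in E. Proof: let N be a Hales-Jewett length for A_{k+i} and |P| colours,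
   and cut the first N terms of t out of s below M + B. Shrink the rest of t
   so that its constant span avoids EF (p c(x)) for all p and lines c of
   length N, and pick g \in E in this span: for every p and c some
   p c(a0) g is not in E. A line c monochromatic for the colouring
   b |-> (E (p b g))_p then gives v = c(x) g. *)
Lemma step i M t (P : seq (seq T)) : i <= M -> is_vseq A t ->
  extracted A (k + M) t (shift M s) -> (forall p, p \in P -> cspan_in A s k 0 M p) ->
  exists v M' t', [/\ M < M', vspan s (fun n => M <= n < M') (fun n => A (k + n)) v,
    is_vseq A t', extracted A (k + M') t' (shift M' s) &
    forall p, p \in P -> forall a, a \in A (k + i) -> ~ E (p ++ subst v a)].
Proof.
move=> le_iM t_vseq t_ext P_s; set Lam := A (k + i).
have Lam_sub : {subset Lam <= A (k + M)} by apply: (A_mono A_incr); rewrite leq_add2l.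
have [N N_pos HJ_N] := HJ_family Lam (size P).
have [B [le_NB t_bl tail_ext]] := extracted_split t_ext N_pos.
have tail_ext' : extracted A (k + (M + B)) (shift N t) (shift (M + B) s).
  by rewrite addnA -shift_shift.
have M1_pos : 0 < M + B by rewrite addn_gt0 (leq_trans N_pos le_NB) orbT.
have c_span : forall c, c \in lines Lam N ->
    vspan s (fun n => M <= n < M + B) (fun n => A (k + n)) (line t c).
  move=> c; rewrite mem_lines => /and3P[c_x /eqP size_c c_Lam]; rewrite -size_c in t_bl.
  exact: (line_span A_incr c_x (over_alph_sub Lam_sub c_Lam) t_bl).
set Ws := [seq map Some p ++ line t c | p <- P, c <- lines Lam N].
have Ws_span : forall W, W \in Ws -> vspan s (fun n => n < M + B) (fun n => A (k + n)) W.
  move=> _ /allpairsP[[p c] [p_P c_line ->]].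
  exact: vspan_cat_l (leq0n M) (leq_addr B M) (P_s p p_P) (c_span c c_line).
have [g [M2 [t3 [lt_M12 g_s t3_vseq t3_ext bad]]]] :=
  spoiling_word M1_pos Ws_span (fun n => t_vseq (N + n)) tail_ext'.
have [c c_line c_mono] :=
  HJ_N (fun j b => E (nth [::] P j ++ ccat t (zip (iota 0 N) b) ++ g)).
have size_c : size c = N by move: c_line; rewrite mem_lines => /and3P[_ /eqP].
exists (line t c ++ map Some g), M2, t3; split=> //.
- exact: leq_ltn_trans (leq_addr B M) lt_M12.
- exact: vspan_cat_r (leq_addr B M) (ltnW lt_M12) (c_span c c_line) g_s.
move=> p p_P a a_Lam E_pa.
have [a0 a0_k not_E] := bad _ (allpairs_f (fun p c => map Some p ++ line t c) p_P c_line).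
have a0_Lam : a0 \in Lam by apply: (A_mono A_incr) a0_k; apply: leq_addr.
apply: not_E; rewrite subst_cat subst_map_Some -catA subst_line size_c.
have /= := c_mono (index p P) a a0; rewrite nth_index // index_mem p_P; apply=> //.
by move: E_pa; rewrite subst_cat subst_map_Some subst_line size_c.
Qed.

Record state := State { bound : nat; rest : vseqs T; prefixes : seq (seq T) }.

Definition state_inv n (st : state) := [/\ n <= bound st, is_vseq A (rest st),
  extracted A (k + bound st) (rest st) (shift (bound st) s) &
  forall p, p \in prefixes st -> cspan_in A s k 0 (bound st) p].

Definition step_spec n (st : state) (v : vword T) (st' : state) :=
  [/\ bound st < bound st',
      vspan s (fun m => bound st <= m < bound st') (fun m => A (k + m)) v,
      is_vseq A (rest st'), extracted A (k + bound st') (rest st') (shift (bound st') s) &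
      (forall p, p \in prefixes st -> forall a, a \in A (k + n) -> ~ E (p ++ subst v a)) /\
      prefixes st' = prefixes st ++ [seq p ++ subst v a | p <- prefixes st, a <- A (k + n)]].

Lemma step_exists n st : state_inv n st -> exists vst, step_spec n st vst.1 vst.2.
Proof.
case=> le_n st_vseq st_ext P_s.
have [v [M' [t' [lt_M v_span t'_vseq t'_ext avoid]]]] := step le_n st_vseq st_ext P_s.
set P' := prefixes st ++ [seq p ++ subst v a | p <- prefixes st, a <- A (k + n)].
by exists (v, State M' t' P'); split.
Qed.

Definition next n st : vword T * state :=
  epsilon (inhabits ([::], st)) (fun vst => step_spec n st vst.1 vst.2).

Lemma next_spec n st : state_inv n st -> step_spec n st (next n st).1 (next n st).2.
Proof. by move/step_exists; apply: epsilon_spec. Qed.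

Fixpoint states n : state :=
  if n is n'.+1 then (next n' (states n')).2 else State 0 s [:: [::]].

Definition vs n := (next n (states n)).1.

Lemma states_inv n : state_inv n (states n).
Proof.
elim: n => [|n IH].
  split=> //=; first exact: extracted_refl.
  by move=> p; rewrite inE => /eqP ->; exists [::].
have [lt_M v_span st_vseq st_ext [_ def_P]] := next_spec IH.
case: IH => le_n _ _ P_s; split=> //=; first exact: leq_ltn_trans le_n lt_M.
rewrite def_P => p; rewrite mem_cat => /orP[/P_s[cs [in_cs ->]]|].
  by exists cs; split=> //; apply: idx_in_widen in_cs => //; apply: ltnW.
case/allpairsP=> -[p' a] [/= p'_P a_A ->].
apply: (cspan_in_app A_incr (leq0n _) (ltnW lt_M) (P_s _ p'_P) v_span).
by apply: (A_mono A_incr) a_A; rewrite leq_add2l.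
Qed.

Lemma vs_spec n : step_spec n (states n) (vs n) (states n.+1).
Proof. exact: next_spec (states_inv n). Qed.

Lemma prefixes_mono j j' : j <= j' -> {subset prefixes (states j) <= prefixes (states j')}.
Proof.
move/subnK <-; elim: (j' - j) => // d IH p /IH.
by have [_ _ _ _ [_ ->]] := vs_spec (d + j); rewrite mem_cat => ->.
Qed.

Lemma prefixes_complete cs j : idx_in A k 0 j (lift_idx cs) -> ccat vs cs \in prefixes (states j).
Proof.
elim/last_ind: cs j => [|cs [n a] IH] j; first by move=> _; apply: (prefixes_mono (leq0n j)).
rewrite /lift_idx map_rcons => /idx_in_rcons[in_cs /andP[_ lt_nj] a_A].
apply: (prefixes_mono lt_nj); have [_ _ _ _ [_ ->]] := vs_spec n.
rewrite ccat_rcons mem_cat; apply/orP; right.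
exact: (allpairs_f (fun p a => p ++ subst (vs n) a) (IH _ in_cs) a_A).
Qed.

(* The constructed sequence is extracted from s, so E meets its constant span
   in some word p v_j(a) with p among the prefixes of step j: impossible. *)
Lemma contradiction : False.
Proof.
have vs_vseq : is_vseq A vs.
  by move=> n; case: (vs_spec n) => _ v_span _ _ _; exact: vspan_vword s_vseq v_span.
have vs_ext : extracted A k vs s.
  by move=> l; exists (fun n => bound (states n)); split=> //; split=> i _; case: (vs_spec i).
have [z [E_z /cspanE[cs [hi [ne in_cs def_z]]]]] := E_large vs_vseq vs_ext.
case/lastP: cs ne in_cs def_z => // cs [j a] _.
rewrite /lift_idx map_rcons => /idx_in_rcons[in_p _ a_A] def_z.
have [_ _ _ _ [avoid _]] := vs_spec j.
by apply: (avoid _ (prefixes_complete in_p) a a_A); rewrite def_z ccat_rcons in E_z.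
Qed.
End Contradiction.

Theorem lemma3p8 (T : eqType) (A : nat -> seq T)
  (hA_nonempty : forall n, A n != [::])
  (hA_incr : forall n, {subset A n <= A n.+1})
  (k : nat) (E : seq T -> Prop) (hE : forall z, E z -> isW A z)
  (s : vseqs T) (hs : is_vseq A s)
  (hlarge : large A k E s) :
  exists m : nat, 1 <= m /\
    exists w : vword T,
      vspan s (fun n => n < m) (fun n => A (k + n)) w /\
      exists t : vseqs T, is_vseq A t /\
        extracted A (k + m) t (fun n => s (m + n)) /\
        large A (k + m)
          (fun z => E z /\ E_F A E (fun u => exists a, a \in A k /\ u = subst w a) z)
          t.
Proof.
apply: NNPP => no_witness; apply: (contradiction hA_incr hE hs hlarge).
move=> m m_pos w w_span t t_vseq t_ext t_large; apply: no_witness.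
by exists m; split=> //; exists w; split=> //; exists t.
Qed.
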